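(* Let $(\mathcal{P},d)$ be a tree metric given by the weighted tree $T$, let $G$ be any directed network on $\mathcal{P}$ (arc $(x,y)$ of length $d(x,y)$), and let $u\neq v$ be in $\mathcal{P}$. Then every node other than $u$ on any greedy path from $u$ to $v$ in $G$ lies in the connected component of $T-u$ that contains $v$.
   Context: A tree metric on a finite set $\mathcal{P}$ is given by a spanning tree $T$ on vertex set $\mathcal{P}$ with positive edge weights; $d(x,y)=d_T(x,y)$ is the total weight of the unique $x$–$y$ path in $T$. $T-u$ is the forest obtained by deleting $u$ (its components are the subtrees hanging below $u$ when $T$ is rooted at $u$). A greedy path from $u$ to $v$ in $G$ is a directed path $u=x_1,\dots,x_j=v$ of arcs of $G$ with $d(x_i,v)>d(x_{i+1},v)$ for all $i$. *)

From mathcomp Require Import all_boot all_order all_algebra.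
Set Implicit Arguments. Unset Strict Implicit. Unset Printing Implicit Defensive.
Import Order.TTheory GRing.Theory Num.Theory.
Local Open Scope ring_scope.

Definition simple_path (P : finType) (e : rel P) (x : P) (p : seq P) : bool :=
  path e x p && uniq (x :: p).

Definition is_tree (P : finType) (e : rel P) : Prop :=
  [/\ symmetric e, irreflexive e,
      (forall x y : P, connect e x y) &
      (forall (x : P) (p q : seq P),
          simple_path e x p -> simple_path e x q -> last x p = last x q -> p = q)].

Definition pos_weights (R : realFieldType) (P : finType) (e : rel P)
    (w : P -> P -> R) : Prop :=
  (forall x y, w x y = w y x) /\ (forall x y, e x y -> 0 < w x y).

Definition walk_weight (R : realFieldType) (P : finType) (w : P -> P -> R)
    (x : P) (p : seq P) : R :=
  \sum_(c <- pairmap w x p) c.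

Definition is_tree_metric (R : realFieldType) (P : finType) (e : rel P)
    (w : P -> P -> R) (d : P -> P -> R) : Prop :=
  forall (x : P) (p : seq P), simple_path e x p -> d x (last x p) = walk_weight w x p.

Definition greedy_path (R : realFieldType) (P : finType) (G : rel P)
    (d : P -> P -> R) (u v : P) (p : seq P) : bool :=
  path (fun a b => G a b && (d b v < d a v)) u p && (last u p == v).

Definition in_comp_minus (P : finType) (e : rel P) (u v x : P) : bool :=
  (x != u) && connect [rel a b | [&& e a b, a != u & b != u]] v x.

From mathcomp Require Import all_boot all_order all_algebra.
Set Implicit Arguments. Unset Strict Implicit. Unset Printing Implicit Defensive.
Import Order.TTheory GRing.Theory Num.Theory.
Local Open Scope ring_scope.

(* Every vertex x after u on a greedy path satisfies d x v < d u v.  Take a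
   simple T-path from x to v.  If it passed through u, additivity of the tree
   metric along it would give d x v = d x u + d u v >= d u v.  Hence it avoids
   u, and so x is joined to v in T - u. *)

Lemma path_decreasing_lt_head (disp : Order.disp_t) (R : porderType disp)
    (T : eqType) (r : rel T) (f : T -> R) (a : T) (s : seq T) :
  path (fun x y => r x y && (f y < f x)%O) a s -> forall x, x \in s -> (f x < f a)%O.
Proof.
elim: s a => [|b s IH] a //= /andP[/andP[_ fba] pbs] x.
rewrite inE => /predU1P[->//|xs].
exact: lt_trans (IH _ pbs _ xs) fba.
Qed.

Lemma simple_path_split (P : finType) (e : rel P) (x y : P) (s1 s2 : seq P) :
  simple_path e x (s1 ++ y :: s2) ->
  simple_path e x (rcons s1 y) /\ simple_path e y s2.
Proof.
rewrite /simple_path -cat_rcons cat_path last_rcons -cat_cons cat_uniq.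
case/and4P=> /andP[-> ->] -> /hasPn s2_fresh us2; split=> //=; rewrite us2 andbT.
by apply/negP=> /s2_fresh; rewrite -cats1 !(inE, mem_cat) eqxx !orbT.
Qed.

Lemma connect_simple_path (P : finType) (e : rel P) (x y : P) :
  connect e x y -> exists2 s, simple_path e x s & last x s = y.
Proof.
case/connectP=> s0 ps0 ->; case/shortenP: ps0 => s ps us _.
by exists s => //; rewrite /simple_path ps us.
Qed.

Lemma connect_avoiding (P : finType) (e : rel P) (u x : P) (s : seq P) :
  path e x s -> u \notin x :: s ->
  connect [rel a b | [&& e a b, a != u & b != u]] x (last x s).
Proof.
move=> pxs uxs; apply/connectP; exists s => //.
apply: (@sub_in_path _ (predC1 u)) pxs; last first.
  by apply/allP => y yxs /=; apply: contraNneq uxs => <-.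
by move=> a b; rewrite !inE /= => -> -> ->.
Qed.

Section TreeMetric.

Variables (R : realFieldType) (P : finType) (e : rel P) (w d : P -> P -> R).

Lemma walk_weight_cat (x : P) (s1 s2 : seq P) :
  walk_weight w x (s1 ++ s2) = walk_weight w x s1 + walk_weight w (last x s1) s2.
Proof. by rewrite /walk_weight pairmap_cat big_cat. Qed.

Lemma walk_weight_ge0 (x : P) (s : seq P) :
  pos_weights e w -> path e x s -> 0 <= walk_weight w x s.
Proof.
move=> [_ w_gt0]; elim: s x => [|y s IH] x /=; first by rewrite /walk_weight big_nil.
case/andP=> exy pys; rewrite /walk_weight /= big_cons.
by apply: addr_ge0; [exact/ltW/w_gt0 | exact: IH].
Qed.

Lemma tree_metric_through_ge (x y : P) (s1 s2 : seq P) :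
  pos_weights e w -> is_tree_metric e w d ->
  simple_path e x (s1 ++ y :: s2) -> d y (last y s2) <= d x (last y s2).
Proof.
move=> hw hd sp; have [sp1 sp2] := simple_path_split sp.
have dxy : d x y = walk_weight w x (rcons s1 y) by rewrite -[y in d x y](last_rcons x s1) hd.
have dxz : d x (last y s2) = walk_weight w x (s1 ++ y :: s2) by rewrite -hd // last_cat.
rewrite dxz -cat_rcons walk_weight_cat last_rcons -dxy (hd _ _ sp2) lerDr dxy.
by apply: walk_weight_ge0 => //; case/andP: sp1.
Qed.

Lemma tree_metric_closer_in_comp_minus (u v x : P) :
  is_tree e -> pos_weights e w -> is_tree_metric e w d ->
  x != u -> d x v < d u v -> in_comp_minus e u v x.
Proof.
move=> [esym _ econn _] hw hd xu dxv_lt; rewrite /in_comp_minus xu /=.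
have sym_minus : symmetric [rel a b | [&& e a b, a != u & b != u]].
  by move=> a b /=; rewrite esym [(a != u) && _]andbC.
rewrite (sym_connect_sym sym_minus).
have [s sp sv] := connect_simple_path (econn x v); subst v.
have [uxs|] := boolP (u \in x :: s); last by apply: connect_avoiding; case/andP: sp.
move: uxs; rewrite inE eq_sym (negbTE xu) /= => /splitPr sp_u.
case: sp_u sp dxv_lt => s1 s2 sp; rewrite last_cat /=.
by rewrite ltNge (tree_metric_through_ge hw hd sp).
Qed.

End TreeMetric.

Theorem lemma3p1 (R : realFieldType) (P : finType) (e : rel P)
    (w : P -> P -> R) (d : P -> P -> R) (G : rel P) (u v : P)
    (p : seq P) :
  is_tree e -> pos_weights e w -> is_tree_metric e w d ->
  u != v -> greedy_path G d u v p ->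
  forall x, x \in p -> x != u -> in_comp_minus e u v x.
Proof.
move=> tree hw hd _ /andP[greedy _] x xp xu.
apply: tree_metric_closer_in_comp_minus tree hw hd xu _.
exact: (path_decreasing_lt_head (f := fun y => d y v) greedy xp).
Qed.
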